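(* Let $V$ be a finite-dimensional real Hilbert space with inner product $\langle\cdot,\cdot\rangle$, let $M\subset V$ be a convex open subset, and let $f\in C^1(M,V)$ satisfy (i) there exists $A_0\in M$ such that the Fréchet derivative $Df[A_0]$ is positive definite; (ii) for every $A\in M$, $Df[A]$ is invertible and self-adjoint. Then $\langle Df[A].H,\,H\rangle>0$ for all $A\in M$ and all $H\in V\setminus\{0\}$, and consequently $f$ is strictly monotone on $M$, i.e. $\langle f(A)-f(B),\,A-B\rangle>0$ for all $A\neq B$ in $M$.
   Context: $Df[A]\in L(V,V)$ denotes the Fréchet derivative of $f$ at $A$; it is positive definite if $\langle Df[A].H,H\rangle>0$ for all $H\neq 0$. *)

(* V = 'rV[R]_n equipped with an ARBITRARY inner
   product <u,v> = u Q v^T, Q symmetric positive definite (every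
   finite-dimensional real inner product space is of this form). *)
From HB Require Import structures.
From mathcomp Require Import all_boot all_order all_algebra.
From mathcomp Require Import all_classical all_reals all_analysis.
Set Implicit Arguments. Unset Strict Implicit. Unset Printing Implicit Defensive.
Import Order.TTheory GRing.Theory Num.Theory.
Import numFieldNormedType.Exports.
Local Open Scope classical_set_scope.
Local Open Scope ring_scope.

Section Defs.
Variables (R : realType) (n : nat).
Implicit Types (Q : 'M[R]_n) (u v : 'rV[R]_n).

Definition ip Q u v : R := (u *m Q *m v^T) 0 0.

Definition is_inner_product Q : Prop :=
  Q^T = Q /\ (forall u, u != 0 -> 0 < ip Q u u).

Definition posdef_op Q (L : 'rV[R]_n -> 'rV[R]_n) : Prop :=
  forall H, H != 0 -> 0 < ip Q (L H) H.

Definition selfadjoint_op Q (L : 'rV[R]_n -> 'rV[R]_n) : Prop :=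
  forall H K, ip Q (L H) K = ip Q H (L K).

Definition convex_subset (M : set 'rV[R]_n) : Prop :=
  forall A B (t : R), M A -> M B -> 0 <= t <= 1 -> M (t *: A + (1 - t) *: B).

Definition C1_on (M : set 'rV[R]_n) (f : 'rV[R]_n -> 'rV[R]_n) : Prop :=
  (forall A, M A -> differentiable f A) /\
  {in M, continuous (fun A => lin1_mx ('d f A))}.
End Defs.

From HB Require Import structures.
From mathcomp Require Import all_boot all_order all_algebra.
From mathcomp Require Import all_classical all_reals all_analysis.
From mathcomp Require Import ring lra.
Import Order.TTheory GRing.Theory Num.Theory.
Import numFieldNormedType.Exports.
Local Open Scope classical_set_scope.
Local Open Scope ring_scope.
Set Implicit Arguments. Unset Strict Implicit. Unset Printing Implicit Defensive.

(* Along the segment from A0 to A, the matrices of the forms (H, K) |-> <Df[.]H, K>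
   vary continuously and are symmetric and invertible.  Among such matrices positive
   definiteness is open (a positive definite form is coercive) and closed (an
   invertible symmetric semidefinite form is definite), so by connectedness of [0, 1]
   it propagates from A0 to A.  Strict monotonicity then follows from the mean value
   theorem for t |-> <f (B + t (A - B)), A - B>, whose derivative is
   <Df[.](A - B), A - B> > 0. *)

Definition l1norm (R : numDomainType) m p (X : 'M[R]_(m, p)) : R :=
  \sum_i \sum_j `|X i j|.

Lemma l1norm_ge0 (R : numDomainType) m p (X : 'M[R]_(m, p)) : 0 <= l1norm X.
Proof. by do 2!(apply: sumr_ge0 => ? _); exact: normr_ge0. Qed.

Section MatrixNorms.
Variables (R : realType) (m p : nat).
Implicit Types X : 'M[R]_(m, p).

Lemma mx_norm_coord_le X i j : `|X i j| <= `|X|.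
Proof.
rewrite [leRHS]/Num.norm /= mx_normrE; apply/bigmax_geP; right => /=.
by exists (i, j).
Qed.

Lemma l1norm_le_mx_norm X : l1norm X <= (m * p)%:R * `|X|.
Proof.
apply: (@le_trans _ _ (\sum_(i < m) \sum_(j < p) `|X|)).
  by do 2!(apply: ler_sum => ? _); exact: mx_norm_coord_le.
by rewrite !sumr_const !card_ord -mulrnA mulr_natl mulnC.
Qed.

Lemma mulmxr_continuous q (Y : 'M[R]_(p, q)) :
  continuous (mulmxr Y : 'M[R]_(m, p) -> 'M[R]_(m, q)).
Proof.
apply: bounded_linear_continuous; apply/bounded_funP => r.
exists (r * l1norm Y) => X Xr /=; rewrite [leLHS]/Num.norm /= mx_normrE.
apply: bigmax_le => [|[i j] _ /=]; first exact/mulr_ge0/l1norm_ge0/(le_trans _ Xr).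
rewrite mxE /l1norm exchange_big mulr_sumr; apply: le_trans (ler_norm_sum _ _ _) _.
rewrite (bigD1 j) //= -[X in X <= _]addr0 lerD //; last first.
  apply: sumr_ge0 => ? _; apply/mulr_ge0/sumr_ge0 => *; last exact: normr_ge0.
  exact/le_trans/Xr.
rewrite mulr_sumr; apply: ler_sum => k _; rewrite normrM ler_wpM2r //.
exact: le_trans (mx_norm_coord_le X i k) Xr.
Qed.

End MatrixNorms.

Section QuadraticForms.
Variables (R : realType) (n : nat).
Implicit Types (P : 'M[R]_n) (u v w : 'rV[R]_n).

Definition sqnorm u : R := (u *m u^T) 0 0.

Definition symmetric_form P : Prop := forall u v, ip P u v = ip P v u.

Definition posdefmx P : Prop := forall u, u != 0 -> 0 < ip P u u.

Definition psdmx P : Prop := forall u, 0 <= ip P u u.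

Lemma sqnormE u : sqnorm u = \sum_k u 0 k ^+ 2.
Proof. by rewrite /sqnorm mxE; apply: eq_bigr => k _; rewrite !mxE expr2. Qed.

Lemma sqnorm_ge0 u : 0 <= sqnorm u.
Proof. by rewrite sqnormE; apply: sumr_ge0 => k _; exact: sqr_ge0. Qed.

Lemma sqr_coord_le_sqnorm u k : u 0 k ^+ 2 <= sqnorm u.
Proof.
by rewrite sqnormE (bigD1 k) //= lerDl; apply: sumr_ge0 => i _; exact: sqr_ge0.
Qed.

Lemma sqnorm_gt0 u : u != 0 -> 0 < sqnorm u.
Proof.
move=> u0; rewrite lt_neqAle sqnorm_ge0 andbT; apply: contra u0 => /eqP u_0.
apply/eqP/rowP => k; rewrite mxE; apply/eqP; rewrite -sqrf_eq0 eq_le sqr_ge0 andbT.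
by rewrite u_0 sqr_coord_le_sqnorm.
Qed.

Lemma ipE P u v : ip P u v = \sum_j (\sum_i u 0 i * P i j) * v 0 j.
Proof. by rewrite /ip mxE; apply: eq_bigr => j _; rewrite !mxE. Qed.

Lemma ip_norm_le P u : `|ip P u u| <= l1norm P * sqnorm u.
Proof.
rewrite ipE /l1norm exchange_big mulr_suml; apply: le_trans (ler_norm_sum _ _ _) _.
apply: ler_sum => j _; rewrite mulr_suml mulr_suml.
apply: le_trans (ler_norm_sum _ _ _) _; apply: ler_sum => i _.
have ui := sqr_coord_le_sqnorm u i; have uj := sqr_coord_le_sqnorm u j.
rewrite -(real_normK (num_real (u 0 i))) in ui.
rewrite -(real_normK (num_real (u 0 j))) in uj.
have uij : `|u 0 i| * `|u 0 j| <= sqnorm u by nra.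
by rewrite !normrM -mulrA mulrC -mulrA ler_wpM2l // mulrC.
Qed.

Lemma ipDm P1 P2 u v : ip (P1 + P2) u v = ip P1 u v + ip P2 u v.
Proof. by rewrite /ip mulmxDr mulmxDl mxE. Qed.

Lemma ip_perturb P1 P2 u :
  `|ip P2 u u - ip P1 u u| <= l1norm (P2 - P1) * sqnorm u.
Proof.
by rewrite -[P2 in ip P2](subrK P1) ipDm addrK ip_norm_le.
Qed.

Lemma ipDl P u v w : ip P (u + v) w = ip P u w + ip P v w.
Proof. by rewrite /ip !mulmxDl mxE. Qed.

Lemma ipDr P u v w : ip P w (u + v) = ip P w u + ip P w v.
Proof. by rewrite /ip linearD /= mulmxDr mxE. Qed.

Lemma ipZl P a u v : ip P (a *: u) v = a * ip P u v.
Proof. by rewrite /ip -!scalemxAl mxE. Qed.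

Lemma ipZr P a u v : ip P u (a *: v) = a * ip P u v.
Proof. by rewrite /ip linearZ /= -scalemxAr mxE. Qed.

Lemma ipNl P u v : ip P (- u) v = - ip P u v.
Proof. by rewrite -scaleN1r ipZl mulN1r. Qed.

Lemma ipNr P u v : ip P u (- v) = - ip P u v.
Proof. by rewrite -scaleN1r ipZr mulN1r. Qed.

Lemma ip_combination P a b u v :
  ip P (a *: u - b *: v) (a *: u - b *: v) =
  a ^+ 2 * ip P u u - a * b * (ip P u v + ip P v u) + b ^+ 2 * ip P v v.
Proof. by rewrite !(ipDl, ipDr, ipNl, ipNr, ipZl, ipZr); ring. Qed.

Lemma posdefmx_psd P : posdefmx P -> psdmx P.
Proof.
move=> pdP u; have [->|u0] := eqVneq u 0; last exact/ltW/pdP.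
by rewrite /ip !mul0mx mxE.
Qed.

Lemma posdefmx_unit P : posdefmx P -> P \in unitmx.
Proof.
move=> pdP; rewrite unitmxE unitfE; apply/negP => /det0P[u u0 uP].
by have := pdP u u0; rewrite /ip uP mul0mx mxE ltxx.
Qed.

(* With [K := u *m (P^-1)^T] one has [ip P u K = |u|^2] and
   [ip P K K = ip (P^-1)^T u u <= l |u|^2]; positivity at [(l + 1) u - K] then
   yields [|u|^2 <= (l + 1) ip P u u]. *)
Lemma posdefmx_coercive P : symmetric_form P -> posdefmx P ->
  exists2 c, 0 < c & forall u, c * sqnorm u <= ip P u u.
Proof.
move=> symP pdP; have Pu := posdefmx_unit pdP.
set B := (invmx P)^T; set l := l1norm B.
have l0 : 0 <= l := l1norm_ge0 B.
exists (l + 1)^-1; first by rewrite invr_gt0; lra.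
move=> u; set K := u *m B.
have uK : ip P u K = sqnorm u.
  by rewrite /ip /sqnorm /K trmx_mul trmxK mulmxA -(mulmxA u) mulmxV ?mulmx1.
have KK : ip P K K = ip B u u.
  by rewrite /ip /K trmx_mul trmxK -/B !mulmxA -(mulmxA (u *m B)) mulmxV ?mulmx1.
have := posdefmx_psd pdP ((l + 1) *: u - 1 *: K).
rewrite ip_combination [ip P K u]symP uK KK.
have := ip_norm_le B u; rewrite ler_norml -/l => /andP[_ Bu].
have := sqnorm_ge0 u => u0 psd.
have l1 : 0 < l + 1 by lra.
by rewrite mulrC ler_pdivrMr // -(ler_pM2l l1); nra.
Qed.

(* If [ip P u u = 0] with [u != 0], then [K := u *m P] has [ip P u K = |K|^2 > 0],
   and the form is negative at [(ip P K K + 1) u - |K|^2 K]. *)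
Lemma psdmx_posdefmx P :
  symmetric_form P -> P \in unitmx -> psdmx P -> posdefmx P.
Proof.
move=> symP Pu psdP u u0; rewrite lt_neqAle psdP andbT; apply/eqP => uu0.
set K := u *m P.
have uK : ip P u K = sqnorm K by rewrite /ip /sqnorm.
have K0 : 0 < sqnorm K.
  apply: sqnorm_gt0; apply: contra u0 => /eqP uP0.
  by rewrite -(mulmxK Pu u) -/K uP0 mul0mx.
have := psdP ((ip P K K + 1) *: u - sqnorm K *: K).
rewrite ip_combination [ip P K u]symP uK -uu0.
have := psdP K; nra.
Qed.

End QuadraticForms.

Section OperatorForms.
Variables (R : realType) (n : nat) (Q : 'M[R]_n).
Implicit Types (L : {linear 'rV[R]_n -> 'rV[R]_n}) (u v : 'rV[R]_n).

Lemma ip_lin1_mx L u v : ip Q (L u) v = ip (lin1_mx L *m Q) u v.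
Proof. by rewrite /ip -mul_rV_lin1 mulmxA. Qed.

Lemma trmx_symmetric_form : Q^T = Q -> symmetric_form Q.
Proof.
move=> QT u v; have tr11 (X : 'M[R]_1) : X 0 0 = X^T 0 0 by rewrite mxE.
by rewrite /ip tr11 !trmx_mul trmxK QT mulmxA.
Qed.

Lemma selfadjoint_symmetric_form L :
  Q^T = Q -> selfadjoint_op Q L -> symmetric_form (lin1_mx L *m Q).
Proof.
by move=> QT saL u v; rewrite -!ip_lin1_mx saL trmx_symmetric_form.
Qed.

Lemma posdef_opP L : posdef_op Q L <-> posdefmx (lin1_mx L *m Q).
Proof. by split=> pdL u u0; [rewrite -ip_lin1_mx | rewrite ip_lin1_mx]; exact: pdL. Qed.

Lemma lin1_mx_unit L : injective L -> lin1_mx L \in unitmx.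
Proof.
move=> injL; rewrite unitmxE unitfE; apply/negP => /det0P[u u0].
rewrite mul_rV_lin1 -(linear0 L) => /injL u_0.
by rewrite u_0 eqxx in u0.
Qed.

End OperatorForms.

Section PositivityAlongPaths.
Variables (R : realType) (n : nat).
Implicit Types (P : 'M[R]_n) (u : 'rV[R]_n).

Lemma coercive_posdefmx_near P P' c :
  (forall u, c * sqnorm u <= ip P u u) -> l1norm (P' - P) < c -> posdefmx P'.
Proof.
move=> cP PP' u u0; have := ip_perturb P P' u; rewrite ler_norml => /andP[lo _].
have := sqnorm_gt0 u0; have := cP u; nra.
Qed.

Lemma psdmx_of_approx P :
  (forall e, 0 < e -> exists2 P', posdefmx P' & l1norm (P' - P) < e) -> psdmx P.
Proof.
move=> approx u; have [->|u0] := eqVneq u 0; first by rewrite /ip !mul0mx mxE.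
rewrite leNgt; apply/negP => neg; have s0 := sqnorm_gt0 u0.
have e0 : 0 < - ip P u u / sqnorm u by rewrite divr_gt0 ?oppr_gt0.
have [P' pdP'] := approx _ e0.
rewrite ltr_pdivlMr // => close.
have := ip_perturb P P' u; rewrite ler_norml => /andP[_ hi].
have := pdP' u u0; nra.
Qed.

Lemma l1norm_continuous_at (P : R -> 'M[R]_n) t :
  {for t, continuous P} ->
  forall e, 0 < e -> exists2 d, 0 < d & forall s, `|s - t| < d -> l1norm (P s - P t) < e.
Proof.
move=> Pt e e0; have C0 : 0 < (n * n)%:R + 1 :> R by rewrite ltr_wpDl.
have /cvgrPdist_lt /(_ (e / ((n * n)%:R + 1))) := Pt.
move=> /(_ (divr_gt0 e0 C0)) /nbhs_ballP [d d0 near_t]; exists d => // s st.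
have := near_t s; rewrite -ball_normE /= distrC => /(_ st).
rewrite distrC ltr_pdivlMr // => close.
apply: le_lt_trans (l1norm_le_mx_norm _) _; apply: le_lt_trans close.
by rewrite mulrC ler_wpM2l // lerDl.
Qed.

Variable P : R -> 'M[R]_n.
Hypothesis Pcont : forall t, 0 <= t <= 1 -> {for t, continuous P}.
Hypothesis Psym : forall t, 0 <= t <= 1 -> symmetric_form (P t).
Hypothesis Punit : forall t, 0 <= t <= 1 -> P t \in unitmx.

Lemma posdefmx_path_near t : 0 <= t <= 1 -> posdefmx (P t) ->
  exists2 d, 0 < d & forall s, `|s - t| < d -> posdefmx (P s).
Proof.
move=> t01 pdt; have [c c0 ct] := posdefmx_coercive (Psym t01) pdt.
have [d d0 near_t] := l1norm_continuous_at (Pcont t01) c0.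
by exists d => // s st; apply: coercive_posdefmx_near ct (near_t s st).
Qed.

Lemma posdefmx_path_left t : 0 < t <= 1 ->
  (forall s, 0 <= s < t -> posdefmx (P s)) -> posdefmx (P t).
Proof.
move=> /andP[t0 t1] below; have t01 : 0 <= t <= 1 by rewrite ltW.
apply: psdmx_posdefmx (Psym t01) (Punit t01) _; apply: psdmx_of_approx => e e0.
have [d d0 near_t] := l1norm_continuous_at (Pcont t01) e0.
pose s := t - Num.min d t / 2.
have md : Num.min d t <= d by rewrite ge_min lexx.
have mt : Num.min d t <= t by rewrite ge_min lexx orbT.
have m0 : 0 < Num.min d t by rewrite lt_min d0.
exists (P s); first by apply: below; apply/andP; split; rewrite /s; lra.
by apply: near_t; rewrite ltr_norml; apply/andP; split; rewrite /s; lra.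
Qed.

(* The supremum of the [t] such that [P] is positive definite on [0, t] is
   attained by [posdefmx_path_left], and it is 1 by [posdefmx_path_near]. *)
Lemma posdefmx_path : posdefmx (P 0) -> posdefmx (P 1).
Proof.
move=> pd0.
pose S := [set t | 0 <= t <= 1 /\ forall s, 0 <= s <= t -> posdefmx (P s)].
have S0 : S 0.
  split=> [|s /andP[s0 s_0]]; first by rewrite lexx ler01.
  by have -> : s = 0 by apply/eqP; rewrite eq_le s_0 s0.
have supS : has_sup S by split; [exists 0 | exists 1 => t [/andP[_]]].
set ts := sup S.
have ts0 : 0 <= ts by exact: sup_upper_bound.
have ts1 : ts <= 1 by apply: ge_sup => //; [exists 0 | move=> t [/andP[_]]].
have below s : 0 <= s < ts -> posdefmx (P s).
  move=> /andP[s0 sts]; have gap : 0 < ts - s by rewrite subr_gt0.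
  have [t [_ St] ts_t] := sup_adherent gap supS.
  by apply: St; rewrite s0 /=; move: ts_t; rewrite /ts; lra.
have ts01 : 0 <= ts <= 1 by rewrite ts0.
have pdts : posdefmx (P ts).
  have [->|tspos] := eqVneq ts 0; first exact: pd0.
  by apply: posdefmx_path_left => //; rewrite lt_neqAle eq_sym tspos ts0.
suff -> : 1 = ts by [].
apply/eqP; rewrite eq_le ts1 andbT leNgt; apply/negP => ts_lt1.
have [d d0 near_ts] := posdefmx_path_near ts01 pdts.
pose t := Num.min 1 (ts + d / 2).
have t1 : t <= 1 by rewrite ge_min lexx.
have t2 : t <= ts + d / 2 by rewrite ge_min lexx orbT.
have tst : ts < t by rewrite lt_min ts_lt1 ltrDl divr_gt0.
have St : S t.
  split=> [|s /andP[s0 st]]; first by rewrite t1 andbT; lra.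
  have [sts|tss] := ltP s ts; first by apply: below; rewrite s0.
  by apply: near_ts; rewrite ltr_norml; apply/andP; split; lra.
by have := sup_upper_bound supS St; rewrite leNgt tst.
Qed.

End PositivityAlongPaths.

Section Segments.
Variables (R : realType) (n : nat).

Lemma convex_segment (M : set 'rV[R]_n) A B t : convex_subset M ->
  M A -> M B -> 0 <= t <= 1 -> M (t *: (A - B) + B).
Proof.
move=> cvxM MA MB t01.
have -> : t *: (A - B) + B = t *: A + (1 - t) *: B.
  by rewrite scalerBr scalerBl scale1r addrA addrAC.
exact: cvxM.
Qed.

Lemma segment_continuous (D B : 'rV[R]_n) : continuous (fun t : R => t *: D + B).
Proof.
move=> t; apply: (@continuousD _ _ _ (fun t : R => t *: D) (fun=> B)).
  exact: scalel_continuous.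
exact: cst_continuous.
Qed.

End Segments.

Section StrictMonotonicity.
Variables (R : realType) (n : nat) (Q : 'M[R]_n).

Definition ipr (D y : 'rV[R]_n) : R := ip Q y D.

Lemma ipr_is_linear D : linear (ipr D).
Proof. by move=> a u v; rewrite /ipr /ip mulmxDl -scalemxAl !mulmxDl -scalemxAl !mxE. Qed.

HB.instance Definition _ D :=
  GRing.isLinear.Build R 'rV[R]_n R *:%R (ipr D) (ipr_is_linear D).

Lemma ipr_continuous D : continuous (ipr D).
Proof.
have -> : ipr D = (fun X : 'M[R]_1 => X 0 0) \o mulmxr (Q *m D^T).
  by apply/funext => y; rewrite /ipr /ip /= mulmxA.
move=> y; apply: continuous_comp; [exact: mulmxr_continuous | exact: coord_continuous].
Qed.

Lemma is_derive_ipr_segment (f : 'rV[R]_n -> 'rV[R]_n) D B t :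
  differentiable f (t *: D + B) ->
  is_derive t 1 (fun s => ipr D (f (s *: D + B))) (ipr D ('d f (t *: D + B) D)).
Proof.
move=> df; pose g := ( *:%R^~ D) + cst B.
have dg : is_diff t g (( *:%R^~ D) + 0) by exact: is_diffD.
have dfg : is_diff (g t) f ('d f (g t)) by exact: DiffDef.
have dh : is_diff (f (g t)) (ipr D) (ipr D).
  apply: DiffDef; first exact/linear_differentiable/ipr_continuous.
  exact/diff_lin/ipr_continuous.
have dpsi := is_diff_comp dg (is_diff_comp dfg dh).
apply: DeriveDef; first exact/diff_derivable/ex_diff.
rewrite deriveE ?diff_val; last exact: ex_diff.
by rewrite /= -[X in _ (_ X) = _]/(1 *: D + 0) scale1r addr0.
Qed.

Lemma posdef_strict_monotone (M : set 'rV[R]_n) (f : 'rV[R]_n -> 'rV[R]_n) :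
  convex_subset M -> (forall A, M A -> differentiable f A) ->
  (forall A, M A -> posdef_op Q ('d f A)) ->
  forall A B, M A -> M B -> A != B -> 0 < ip Q (f A - f B) (A - B).
Proof.
move=> cvxM df pd A B MA MB AB; set D := A - B.
have D0 : D != 0 by rewrite subr_eq0.
pose psi t := ipr D (f (t *: D + B)).
have der (t : R) : 0 <= t <= 1 -> is_derive t 1 psi (ipr D ('d f (t *: D + B) D)).
  by move=> t01; apply/is_derive_ipr_segment/df; exact: convex_segment.
have [c c01 mvt] : exists2 c, c \in `]0, 1[ &
    psi 1 - psi 0 = ipr D ('d f (c *: D + B) D) * (1 - 0).
  apply: MVT ltr01 _ _ => [t|].
    by rewrite in_itv /= => /andP[t0 t1]; apply: der; rewrite !ltW.
  apply: derivable_within_continuous => t; rewrite in_itv /= => t01.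
  by have [] := der t t01.
have -> : ip Q (f A - f B) D = psi 1 - psi 0.
  by rewrite /psi scale1r scale0r add0r subrK -linearB.
move: c01; rewrite mvt subr0 mulr1 in_itv /= => /andP[c0 c1].
by apply: pd D0; apply: convex_segment; rewrite ?ltW.
Qed.

End StrictMonotonicity.

Lemma posdef_op_propagates (R : realType) (n : nat) (Q : 'M[R]_n)
    (M : set 'rV[R]_n) (f : 'rV[R]_n -> 'rV[R]_n) A0 A :
  is_inner_product Q -> convex_subset M -> C1_on M f ->
  (forall A, M A -> bijective ('d f A) /\ selfadjoint_op Q ('d f A)) ->
  M A0 -> posdef_op Q ('d f A0) -> M A -> posdef_op Q ('d f A).
Proof.
move=> [QT pdQ] cvxM [_ dfc] dfA MA0 pd0 MA.
pose g t := t *: (A - A0) + A0.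
pose P t := lin1_mx ('d f (g t)) *m Q.
have gM t : 0 <= t <= 1 -> M (g t) by exact: convex_segment.
have Pcont t : 0 <= t <= 1 -> {for t, continuous P}.
  move=> t01; change {for t, continuous (mulmxr Q \o (fun B => lin1_mx ('d f B)) \o g)}.
  apply: continuous_comp; first exact: segment_continuous.
  apply: continuous_comp; last exact: mulmxr_continuous.
  by apply: dfc; rewrite inE; exact: gM.
have Psym t : 0 <= t <= 1 -> symmetric_form (P t).
  by move=> t01; apply: selfadjoint_symmetric_form QT (dfA _ (gM t t01)).2.
have Punit t : 0 <= t <= 1 -> P t \in unitmx.
  move=> t01; rewrite unitmx_mul (posdefmx_unit pdQ) andbT.
  exact/lin1_mx_unit/bij_inj/(dfA _ (gM t t01)).1.
have -> : A = g 1 by rewrite /g scale1r subrK.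
apply/posdef_opP/(posdefmx_path Pcont Psym Punit).
by rewrite /P /g scale0r add0r; apply/posdef_opP.
Qed.

Theorem lemma1p1 (R : realType) (n : nat) (Q : 'M[R]_n)
  (M : set 'rV[R]_n) (f : 'rV[R]_n -> 'rV[R]_n) :
  is_inner_product Q ->
  convex_subset M -> open M -> C1_on M f ->
  (exists A0, M A0 /\ posdef_op Q ('d f A0)) ->
  (forall A, M A -> bijective ('d f A) /\ selfadjoint_op Q ('d f A)) ->
  (forall A, M A -> posdef_op Q ('d f A)) /\
  (forall A B, M A -> M B -> A != B -> 0 < ip Q (f A - f B) (A - B)).
Proof.
move=> ipQ cvxM _ C1f [A0 [MA0 pd0]] dfA.
have pdM A : M A -> posdef_op Q ('d f A).
  exact: posdef_op_propagates ipQ cvxM C1f dfA MA0 pd0.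
by split=> //; apply: posdef_strict_monotone cvxM (proj1 C1f) pdM.
Qed.
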